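(* Let $f:2^{\mathcal N}\to\mathbb R_{\ge0}$ be non-negative submodular, and let $\mathcal N$ be partitioned into non-empty parts $P_1,\dots,P_k$, each containing a dummy element $d_j\in P_j$ with $f(S)=f(S\setminus\{d_1,\dots,d_k\})$ for all $S$. Consider the Smooth Residual Random Greedy algorithm with parameter $T$: $S_0=\emptyset$; for $i=1,\dots,T$, set $S_i=S_{i-1}$, let $M_i$ consist of, for each $j\in I(S_{i-1})$, one element of $P_j$ maximizing $f(S_{i-1}\cup\{u\})-f(S_{i-1})$ over $u\in P_j$; pick $j$ uniformly at random from $\{1,\dots,k\}$ and, if $j\in I(S_{i-1})$, let $u_i$ be the element of $M_i$ in $P_j$ and set $S_i=S_{i-1}\cup\{u_i\}$. Then for every $i=1,\dots,T$, $$\mathbb E[f(O_{S_i}\cup S_i)]\ge\Big(1-\frac2k\Big)\mathbb E[f(O_{S_{i-1}}\cup S_{i-1})]+\frac1k\,\mathbb E[f(S_{i-1})].$$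
   Context: A set function $f$ is submodular if $f(A\cup B)+f(A\cap B)\le f(A)+f(B)$ for all $A,B\subseteq\mathcal N$. The partition matroid has independent sets $\mathcal I=\{S\subseteq\mathcal N: |S\cap P_j|\le1\ \forall j\}$. For $S\subseteq\mathcal N$, $I(S)=\{j: P_j\cap S=\emptyset\}$. For $S\in\mathcal I$, $O_S$ denotes a fixed set $A\subseteq\mathcal N\setminus S$ maximizing $f(S\cup A)$ subject to $S\cup A\in\mathcal I$, chosen (possible thanks to the dummy elements) with $|O_S|=k-|S|$, i.e., containing exactly one element from each part $P_j$, $j\in I(S)$. *)

From HB Require Import structures.
From mathcomp Require Import all_boot all_order all_algebra.
Set Implicit Arguments. Unset Strict Implicit. Unset Printing Implicit Defensive.
Import Order.TTheory GRing.Theory Num.Theory.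
Local Open Scope ring_scope.

(* Ground set N = the finite type T.  The partition P_1..P_k is given by
   a map part : T -> 'I_k (P_j = elements whose part is j). *)
Section Defs.
Variables (R : realFieldType) (T : finType) (k : nat) (part : T -> 'I_k).

Definition P (j : 'I_k) : {set T} := [set x | part x == j].

Definition submodular (f : {set T} -> R) : Prop :=
  forall A B : {set T}, f (A :|: B) + f (A :&: B) <= f A + f B.

Definition indep (S : {set T}) : bool := [forall j, #|S :&: P j| <= 1]%N.

Definition Iset (S : {set T}) : {set 'I_k} := [set j | P j :&: S == set0].

Definition is_OS (f : {set T} -> R) (S A : {set T}) : Prop :=
  [/\ [disjoint A & S], indep (S :|: A),
      (forall B : {set T}, [disjoint B & S] -> indep (S :|: B) ->
          f (S :|: B) <= f (S :|: A)),
      #|A| = (k - #|S|)%N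
    & forall j, j \in Iset S -> #|A :&: P j| = 1%N].

(* sel i S j : the element of M_i lying in P_j (tie-breaking may depend on the
   step i and the current set S). One step of the algorithm with the random
   index j: *)
Definition step (sel : nat -> {set T} -> 'I_k -> T) (i : nat) (S : {set T})
  (j : 'I_k) : {set T} :=
  if j \in Iset S then S :|: [set sel i S j] else S.

Fixpoint run (sel : nat -> {set T} -> 'I_k -> T) (i : nat) (S : {set T})
  (js : seq 'I_k) : {set T} :=
  match js with
  | [::] => S
  | j :: js' => run sel i.+1 (step sel i S j) js'
  end.

(* S_i as a function of the i independent uniform choices j_1..j_i *)
Definition S_alg sel (js : seq 'I_k) : {set T} := run sel 1 set0 js.

Definition Exp sel (i : nat) (g : {set T} -> R) : R :=
  (\sum_(js : i.-tuple 'I_k) g (S_alg sel js)) / (k%:R ^+ i).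

End Defs.

From HB Require Import structures.
From mathcomp Require Import all_boot all_order all_algebra.
From mathcomp Require Import ring lra.
Set Implicit Arguments. Unset Strict Implicit. Unset Printing Implicit Defensive.
Import Order.TTheory GRing.Theory Num.Theory.
Local Open Scope ring_scope.

(* Fix S = S_(i-1) and C = O_S :|: S.  For x in O_S, the random index [part x]
   adds an element u_x of the part of x.  As O_S :\ x is a feasible completion
   of S + u_x, optimality and then submodularity give (for u_x <> x)
     f (O_(S + u_x) :|: (S + u_x)) >= f (C - x + u_x) >= f (C + u_x) + f (C - x) - f C.
   Summing over x, submodularity again bounds the sum of f (C + u_x) - f C below by
   f (C :|: {u_x | x in O_S}) - f C >= - f C, and the sum of f (C - x) - f C below by
   f S - f C; the k - |O_S| indices outside I(S) leave S unchanged.  Hence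
   sum_j f (O_(S_j) :|: S_j) >= (k - 2) f C + f S, and averaging over j and over
   the history gives the claim.  Only u_x \in P_(part x) is used: neither the
   greedy rule nor the dummy elements play a role. *)

Section Submodular.
Variables (R : realFieldType) (T : finType) (f : {set T} -> R).
Hypothesis f_sub : submodular f.

Lemma submodular_marginal_subadd (C A B : {set T}) : [disjoint A & B] ->
  f (C :|: (A :|: B)) - f C <= (f (C :|: A) - f C) + (f (C :|: B) - f C).
Proof.
move=> dAB; have := f_sub (C :|: A) (C :|: B).
by rewrite -setUUr -setUIr (disjoint_setI0 dAB) setU0; lra.
Qed.

Lemma submodular_marginal_sum (C X : {set T}) :
  f (C :|: X) - f C <= \sum_(x in X) (f (C :|: [set x]) - f C).
Proof.
elim: {X}_.+1 {-2}X (ltnSn #|X|) => // n IHn X.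
have [-> _|[x xX]] := set_0Vmem X; first by rewrite big_set0 setU0 subrr.
rewrite (cardsD1 x) xX ltnS (big_setD1 x xX) /= => Xn.
rewrite -{1}(setD1K xX).
apply: le_trans (@submodular_marginal_subadd C [set x] (X :\ x) _) _.
  by rewrite disjoints1 setD11.
by rewrite lerD2l; apply: IHn.
Qed.

Lemma submodular_setD (C : {set T}) : submodular (fun Y => f (C :\: Y)).
Proof. by move=> A B; rewrite /= setDUr setDIr addrC. Qed.

Lemma submodular_swap (C : {set T}) x u : u != x ->
  f (C :|: [set u]) + f (C :\ x) <= f (C :\ x :|: [set u]) + f C.
Proof.
move=> ux; have := f_sub (C :\ x :|: [set u]) C.
have -> : C :\ x :|: [set u] :|: C = C :|: [set u].
  by rewrite setUC setUA (setUidPl (subsetDl _ _)).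
have -> : (C :\ x :|: [set u]) :&: C = C :\ x.
  apply/setP => z; rewrite !inE; case: (eqVneq z u) => [->|_] /=.
    by rewrite ux; case: (u \in C).
  by rewrite orbF -andbA andbb.
by [].
Qed.
End Submodular.

Section PartitionMatroid.
Variables (T : finType) (k : nat) (part : T -> 'I_k).

Lemma in_part x j : (x \in P part j) = (part x == j).
Proof. by rewrite inE. Qed.

Lemma IsetP (S : {set T}) j :
  reflect (forall z, z \in S -> part z != j) (j \in Iset part S).
Proof.
rewrite inE; apply: (iffP eqP) => [S0 z zS|hS].
  by apply/negP => /eqP pz; have := in_set0 z; rewrite -S0 !inE pz eqxx zS.
by apply/setP => z; rewrite !inE; apply/andP => -[/eqP pz /hS]; rewrite pz eqxx.
Qed.

Lemma indep0 : indep part set0.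
Proof. by apply/forallP => j; rewrite set0I cards0. Qed.

Lemma indepS (A B : {set T}) : A \subset B -> indep part B -> indep part A.
Proof.
move=> sAB /forallP iB; apply/forallP => j.
exact: leq_trans (subset_leq_card (setSI _ sAB)) (iB j).
Qed.

Lemma indep_part_inj (A : {set T}) : indep part A -> {in A &, injective part}.
Proof.
move=> /forallP iA x y xA yA pxy; apply: (card_le1_eqP (iA (part x))).
  by rewrite !inE yA pxy eqxx.
by rewrite !inE xA eqxx.
Qed.

Lemma indepU1 (S : {set T}) j u :
  indep part S -> j \in Iset part S -> u \in P part j -> indep part (S :|: [set u]).
Proof.
move=> /forallP iS /IsetP jS; rewrite in_part => /eqP pu; apply/forallP => i.
rewrite setIUl; have [<-|ij] := eqVneq j i.
  have -> : S :&: P part j = set0.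
    by apply/setP => z; rewrite !inE; apply/andP => -[/jS/negbTE ->].
  by rewrite set0U (leq_trans (subset_leq_card (subsetIl _ _))) ?cards1.
have -> : [set u] :&: P part i = set0.
  apply/setP => z; rewrite !inE; apply/andP => -[/eqP ->].
  by rewrite pu (negbTE ij).
by rewrite setU0.
Qed.

End PartitionMatroid.

Section OptimalCompletion.
Variables (R : realFieldType) (T : finType) (k : nat) (part : T -> 'I_k).
Variables (f : {set T} -> R) (S O : {set T}).
Hypothesis OS : is_OS part f S O.

Lemma OS_disjoint x : x \in O -> x \notin S.
Proof. by case: OS => dOS _ _ _ _ /(disjointFr dOS) ->. Qed.

Lemma OS_part_inj : {in O &, injective part}.
Proof.
case: OS => _ iSO _ _ _ x y xO yO.
by apply: (indep_part_inj iSO); rewrite inE ?xO ?yO orbT.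
Qed.

Lemma OS_part_Iset x : x \in O -> part x \in Iset part S.
Proof.
case: OS => _ iSO _ _ _ xO; apply/IsetP => z zS; apply/eqP => pzx.
have zx : z = x by apply: (indep_part_inj iSO) pzx; rewrite inE ?zS ?xO ?orbT.
by move: zS; rewrite zx (negbTE (OS_disjoint xO)).
Qed.

Lemma Iset_OS : Iset part S = part @: O.
Proof.
case: OS => _ _ _ _ oneO; apply/setP => j; apply/idP/imsetP => [jS|[x xO ->]].
  have /card_gt0P[x] : (0 < #|O :&: P part j|)%N by rewrite oneO.
  by rewrite inE in_part => /andP[xO /eqP <-]; exists x.
exact: OS_part_Iset.
Qed.

Lemma card_Iset_OS : #|Iset part S| = #|O|.
Proof. by rewrite Iset_OS (card_in_imset OS_part_inj). Qed.

Lemma OS_setD1 x : x \in O -> (O :|: S) :\ x = S :|: O :\ x.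
Proof.
move=> xO; rewrite setDUl setUC; congr (_ :|: _); apply/setDidPl.
by rewrite disjoint_sym disjoints1 OS_disjoint.
Qed.

Lemma OS_setD : (O :|: S) :\: O = S.
Proof.
case: OS => dOS _ _ _ _.
by rewrite setDUl setDv set0U; apply/setDidPl; rewrite disjoint_sym.
Qed.

Lemma card_OS_le : (#|O| <= k)%N.
Proof. by rewrite -card_Iset_OS (leq_trans (max_card _)) ?card_ord. Qed.

Lemma OS_optimal_setD1 x : x \in O -> f ((O :|: S) :\ x) <= f (O :|: S).
Proof.
case: OS => dOS iSO opt _ _ xO.
rewrite OS_setD1 // [O :|: S]setUC; apply: opt.
  exact: disjointWl (subsetDl _ _) dOS.
by apply: indepS iSO; rewrite setUS ?subsetDl.
Qed.

Lemma OS_exchange x u O' : x \in O -> u \in P part (part x) ->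
  is_OS part f (S :|: [set u]) O' ->
  f ((O :|: S) :\ x :|: [set u]) <= f (O' :|: (S :|: [set u])).
Proof.
case: OS => _ iSO _ _ _ xO uPx [_ _ opt' _ _].
have Ox_part z : z \in O :\ x -> part z != part x.
  by rewrite !inE => /andP[zx zO]; apply: contraNneq zx => /OS_part_inj->.
have disj : [disjoint O :\ x & S :|: [set u]].
  rewrite -setI_eq0; apply/eqP/setP => z; rewrite [RHS]inE inE; apply/negbTE/negP => /andP[zOx]; rewrite !inE => /orP[zS|/eqP zu].
    by move: zOx; rewrite !inE => /andP[_ /OS_disjoint]; rewrite zS.
  by move/Ox_part: zOx; rewrite zu -in_part uPx.
have ind : indep part (S :|: [set u] :|: O :\ x).
  rewrite setUAC; apply: (indepU1 _ _ uPx).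
    by apply: indepS iSO; rewrite setUS ?subsetDl.
  apply/IsetP => z; rewrite inE => /orP[zS|/Ox_part //].
  by move/IsetP: (OS_part_Iset xO); apply.
by rewrite OS_setD1 // setUAC [O' :|: _]setUC; apply: opt'.
Qed.
End OptimalCompletion.

Section OneStep.
Variables (R : realFieldType) (T : finType) (k : nat) (part : T -> 'I_k).
Variables (f : {set T} -> R) (O : {set T} -> {set T}).
Variables (sel : nat -> {set T} -> 'I_k -> T) (t : nat).
Hypotheses (f_ge0 : forall S, 0 <= f S) (f_sub : submodular f).
Hypothesis O_opt : forall S, indep part S -> is_OS part f S (O S).
Hypothesis sel_part : forall S j, j \in Iset part S -> sel t S j \in P part j.

Local Notation g S := (f (O S :|: S)).
Local Notation step := (step part sel t).

Lemma step_exchange_bound S x : indep part S -> x \in O S ->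
  f (O S :|: S :|: [set sel t S (part x)]) + f ((O S :|: S) :\ x) - f (O S :|: S)
    <= g (step S (part x)).
Proof.
move=> iS xO; have OS := O_opt iS; have xS := OS_part_Iset OS xO.
set C := O S :|: S; set u := sel t S (part x).
have uP : u \in P part (part x) by apply: sel_part.
rewrite /step xS; apply: le_trans (OS_exchange OS xO uP (O_opt (indepU1 iS xS uP))).
have [ux|ux] := eqVneq u x; last by rewrite lerBlDr submodular_swap.
have xC : x \in C by rewrite inE xO.
rewrite ux (setUidPl _) ?sub1set // setUC setD1K // addrC addKr.
exact (OS_optimal_setD1 OS xO).
Qed.

Lemma sum_step_split S : indep part S ->
  \sum_j g (step S j) = \sum_(x in O S) g (step S (part x)) + g S *+ (k - #|O S|).
Proof.
move=> iS; have OS := O_opt iS.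
rewrite (bigID [in Iset part S]) /= (Iset_OS OS) big_imset /=; last exact: OS_part_inj OS.
congr (_ + _); rewrite -(Iset_OS OS).
rewrite (eq_bigr (fun=> g S)) => [|j /negbTE jS]; last by rewrite /step jS.
rewrite (eq_bigl [in ~: Iset part S]) => [|j]; last by rewrite in_setC.
rewrite sumr_const; congr (_ *+ _); apply/eqP.
by rewrite -(eqn_add2l #|O S|) -{1}(card_Iset_OS OS) cardsC card_ord subnKC ?(card_OS_le OS).
Qed.

Lemma sum_exchange_ge S : indep part S ->
  f S - g S *+ 2 + g S *+ #|O S| <= \sum_(x in O S) g (step S (part x)).
Proof.
move=> iS; have OS := O_opt iS; set C := O S :|: S.
pose u x := sel t S (part x).
have part_u x : x \in O S -> part (u x) = part x.
  by move=> xO; apply/eqP; rewrite -in_part sel_part ?(OS_part_Iset OS).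
have u_inj : {in O S &, injective u}.
  by move=> x y xO yO /(congr1 part); rewrite !part_u //; apply: (OS_part_inj OS).
have add_ge : - g S <= \sum_(x in O S) (f (C :|: [set u x]) - f C).
  have := submodular_marginal_sum f_sub C (u @: O S).
  rewrite (big_imset _ u_inj) /=; have := f_ge0 (C :|: u @: O S); lra.
have del_ge : f S - g S <= \sum_(x in O S) (f (C :\ x) - f C).
  have := submodular_marginal_sum (submodular_setD f_sub C) set0 (O S).
  by rewrite /= set0U setD0 (OS_setD OS); under eq_bigr do rewrite set0U.
apply: le_trans (_ : \sum_(x in O S) ((f (C :|: [set u x]) - f C)
                     + (f (C :\ x) - f C) + f C) <= _).
  rewrite big_split [X in _ <= X + _]big_split /= sumr_const; lra.
by apply: ler_sum => x xO; have := step_exchange_bound iS xO; rewrite -/C; lra.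
Qed.

Lemma sum_step_ge S : indep part S ->
  (k%:R - 2) * g S + f S <= \sum_j g (step S j).
Proof.
move=> iS; have OS := O_opt iS.
have -> : (k%:R - 2) * g S + f S = f S - g S *+ 2 + g S *+ #|O S| + g S *+ (k - #|O S|).
  by rewrite -addrA -mulrnDr subnKC ?(card_OS_le OS) // -mulr_natl; ring.
by rewrite (sum_step_split iS) lerD2r sum_exchange_ge.
Qed.

End OneStep.

Lemma sum_tuple_rcons (V : nmodType) (A : finType) n (F : n.+1.-tuple A -> V) :
  \sum_(s : n.+1.-tuple A) F s = \sum_(s : n.-tuple A) \sum_(j : A) F [tuple of rcons s j].
Proof.
rewrite pair_bigA /= (reindex (fun p : n.-tuple A * A => [tuple of rcons p.1 p.2])) //.
exists (fun s => ([tuple of belast (thead s) (behead s)], last (thead s) (behead s))).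
  move=> [s j] _; congr (_, _); first apply: val_inj.
    by case: s => [[|x s] ?] //=; rewrite belast_rcons.
  by case: s => [[|x s] ?] //=; rewrite last_rcons.
by move=> s _; apply: val_inj; case: s => [[|x s] ?] //=; rewrite -lastI.
Qed.

Section Expectation.
Variables (R : realFieldType) (T : finType) (k : nat) (part : T -> 'I_k).
Variable sel : nat -> {set T} -> 'I_k -> T.

Lemma run_rcons i S s j :
  run part sel i S (rcons s j) = step part sel (i + size s) (run part sel i S s) j.
Proof.
elim: s i S => [|x s IH] i S /=; first by rewrite addn0.
by rewrite IH addSnnS.
Qed.

Lemma S_alg_indep : (forall t S j, j \in Iset part S -> sel t S j \in P part j) ->
  forall s, indep part (S_alg part sel s).
Proof.
rewrite /S_alg => sel_part s; elim: s 1%N set0 (indep0 part) => //= j s IH i S iS.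
by apply: IH; rewrite /step; case: ifP => // jS; apply: indepU1 (sel_part _ _ _ jS).
Qed.

Lemma Exp_succ n (g : {set T} -> R) :
  Exp part sel n.+1 g =
  Exp part sel n (fun S => (\sum_j g (step part sel n.+1 S j)) / k%:R).
Proof.
rewrite /Exp sum_tuple_rcons -mulr_suml exprS invfM mulrA.
congr (_ * _ * _); apply: eq_bigr => s _; apply: eq_bigr => j _.
by rewrite /S_alg run_rcons size_tuple.
Qed.

Lemma Exp_linear n (a b : R) (g h : {set T} -> R) :
  Exp part sel n (fun S => a * g S + b * h S) =
  a * Exp part sel n g + b * Exp part sel n h.
Proof. by rewrite /Exp big_split /= -!mulr_sumr mulrDl !mulrA. Qed.

Lemma ler_Exp n (g h : {set T} -> R) :
  (forall s : n.-tuple 'I_k, g (S_alg part sel s) <= h (S_alg part sel s)) ->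
  Exp part sel n g <= Exp part sel n h.
Proof.
by move=> le_gh; rewrite ler_wpM2r ?invr_ge0 ?exprn_ge0 ?ler0n ?ler_sum.
Qed.

End Expectation.

Theorem lemma8 (R : realFieldType) (T : finType) (k : nat) (part : T -> 'I_k)
  (f : {set T} -> R) (d : 'I_k -> T)
  (O : {set T} -> {set T}) (sel : nat -> {set T} -> 'I_k -> T) (Tn i : nat) :
  (0 < k)%N ->
  (forall S, 0 <= f S) ->
  submodular f ->
  (forall j, part (d j) = j) ->
  (forall S : {set T}, f S = f (S :\: [set d j | j : 'I_k])) ->
  (forall S : {set T}, indep part S -> is_OS part f S (O S)) ->
  (forall (t : nat) (S : {set T}) (j : 'I_k), j \in Iset part S ->
     sel t S j \in P part j /\
     (forall u, u \in P part j ->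
        f (S :|: [set u]) - f S <= f (S :|: [set sel t S j]) - f S)) ->
  (1 <= i <= Tn)%N ->
  Exp part sel i (fun S => f (O S :|: S)) >=
    (1 - 2 / k%:R) * Exp part sel i.-1 (fun S => f (O S :|: S))
    + 1 / k%:R * Exp part sel i.-1 f.
Proof.
move=> k_gt0 f_ge0 f_sub _ _ O_opt sel_greedy /andP[i_gt0 _].
have sel_part t S j : j \in Iset part S -> sel t S j \in P part j.
  by move=> jS; case: (sel_greedy t S j jS).
case: i i_gt0 => // n _ /=.
rewrite Exp_succ -Exp_linear; apply: ler_Exp => s.
have k_neq0 : k%:R != 0 :> R by rewrite pnatr_eq0 -lt0n.
have -> (G F : R) : (1 - 2 / k%:R) * G + 1 / k%:R * F = ((k%:R - 2) * G + F) / k%:R.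
  by field.
rewrite ler_pM2r ?invr_gt0 ?ltr0n //.
exact (sum_step_ge f_ge0 f_sub O_opt (sel_part n.+1) (S_alg_indep sel_part s)).
Qed.
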